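(* Let $N\ge 1$. (a) Let $D^1_N,\ldots,D^N_N\in\mathbb{R}^{3^N}$ be the semi-lexicographic perturbation columns defined in the context. Then the $N\times N$ matrix $M_N$ with $(i,j)$ entry $(D^i_N)^\top D^j_N$ satisfies $M_N = 2\times 3^N\, I_N$, where $I_N$ is the $N\times N$ identity matrix. (b) Let $D^1_N,\ldots,D^N_N\in\mathbb{R}^N$ be the columns of an $N\times N$ permutation matrix. Then the $N\times N$ matrix $M_N$ with $(i,j)$ entry $(D^i_N)^\top D^j_N$ satisfies $M_N = I_N$.
   Context: Semi-lexicographic perturbation columns: set $D^1_1 = (-1,-1,2)^\top\in\mathbb{R}^3$. Given $D^1_k,\ldots,D^k_k\in\mathbb{R}^{3^k}$, define $D^1_{k+1},\ldots,D^{k+1}_{k+1}\in\mathbb{R}^{3^{k+1}}$ by: $D^1_{k+1}$ has its first $2\times 3^k$ entries equal to $-1$ and its remaining $3^k$ entries equal to $2$; and for $i=2,\ldots,k+1$, $D^i_{k+1}$ is the vertical concatenation $(D^{i-1}_k; D^{i-1}_k; D^{i-1}_k)$ of three copies of $D^{i-1}_k$. Applying this recursion $N-1$ times gives $D^1_N,\ldots,D^N_N$. A permutation matrix is a matrix whose rows are the rows of the identity matrix in some order. *)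

From mathcomp Require Import all_boot all_order all_algebra.
Set Implicit Arguments. Unset Strict Implicit. Unset Printing Implicit Defensive.
Import GRing.Theory Num.Theory.
Local Open Scope ring_scope.

(* Semi-lexicographic perturbation columns.
   [slex_entry N i j] is the j-th entry (0-based) of D^{i+1}_N (i 0-based).
   Level N = 1 is the base case D^1_1 = (-1,-1,2); level N+1 (N >= 1) follows
   the recursion of the paper:
     D^1_{N+1} : first 2*3^N entries -1, remaining 3^N entries 2;
     D^{i+1}_{N+1} (i >= 1) = (D^i_N; D^i_N; D^i_N), whose j-th entry is
       the (j mod 3^N)-th entry of D^i_N.
   Level 0 and out-of-range indices are dummy (never used). *)
Fixpoint slex_entry (R : numDomainType) (N i j : nat) {struct N} : R :=
  match N with
  | 0 => 0
  | 1 => if i == 0%N then (if (j < 2)%N then -1 else 2) else 0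
  | (M.+1) as N' =>
      match i with
      | 0 => if (j < 2 * 3 ^ M)%N then -1 else 2
      | i'.+1 => slex_entry R M i' (j %% 3 ^ M)
      end
  end.

Definition slex_col (R : numDomainType) (N : nat) (i : 'I_N) : 'cV[R]_(3 ^ N) :=
  \col_(j < 3 ^ N) slex_entry R N i j.

Definition gram (R : numDomainType) (N m : nat) (D : 'I_N -> 'cV[R]_m) : 'M[R]_N :=
  \matrix_(i < N, j < N) ((D i)^T *m D j) ord0 ord0.

(* Write an index k < 3^(M+1) as k = t 3^M + j with t < 3 and j < 3^M.  The
   first column depends only on t, through the pattern f = (-1,-1,2), and each
   other column only on j, through a column of level M.  Summing over t first,
   the first column has squared norm (f.f) 3^M = 2 * 3^(M+1) and is orthogonal
   to the others since sum f = 0, while the dot product of two other columns is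
   3 times that of the corresponding columns of level M.  Part (b) is P^T P = 1
   for a permutation matrix P. *)

From mathcomp Require Import all_boot all_order all_algebra ring.
From mathcomp Require Import fingroup perm.
Import GRing.Theory Num.Theory.
Local Open Scope ring_scope.

Lemma big_nat_divmod {V : nmodType} n a (G : nat -> nat -> V) :
  \sum_(0 <= k < n * a) G (k %/ a)%N (k %% a)%N =
  \sum_(0 <= t < n) \sum_(0 <= j < a) G t j.
Proof.
rewrite big_nat_mul; apply: eq_bigr => t _.
rewrite mulSn addnC -[(t * a)%N]add0n big_addn add0n addKn.
apply: eq_big_nat => j /andP[_ lt_ja].
have a_gt0 : (0 < a)%N by apply: leq_ltn_trans lt_ja.
by rewrite addnC divnMDl // divn_small // addn0 modnMDl modn_small.
Qed.

Section Gram.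
Variables (R : numDomainType) (N m : nat).

Lemma gramE (D : 'I_N -> 'cV[R]_m) i j :
  gram D i j = \sum_(k < m) D i k 0 * D j k 0.
Proof. by rewrite !mxE; apply: eq_bigr => k _; rewrite mxE. Qed.

Lemma gram_col (A : 'M[R]_(m, N)) : gram (fun i => col i A) = A^T *m A.
Proof.
apply/matrixP => i j; rewrite gramE !mxE.
by apply: eq_bigr => k _; rewrite !mxE.
Qed.

End Gram.

Section SemiLexicographic.
Variable R : numDomainType.

Definition slex_lead (t : nat) : R := if (t < 2)%N then -1 else 2.

Lemma slex_entry0 M k : slex_entry R M.+1 0 k = slex_lead (k %/ 3 ^ M)%N.
Proof.
case: M => [|M]; first by rewrite divn1.
by rewrite /slex_lead /= ltn_divLR ?expn_gt0 // mulnC.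
Qed.

Lemma slex_entryS M i k :
  slex_entry R M.+2 i.+1 k = slex_entry R M.+1 i (k %% 3 ^ M.+1)%N.
Proof. by []. Qed.

Lemma sum_slex_lead : \sum_(0 <= t < 3) slex_lead t = 0.
Proof. by rewrite !big_nat_recr //= big_geq // /slex_lead /=; ring. Qed.

Lemma sum_slex_lead_sqr : \sum_(0 <= t < 3) slex_lead t * slex_lead t = 6%:R.
Proof. by rewrite !big_nat_recr //= big_geq // /slex_lead /=; ring. Qed.

Lemma slex_dot00 M :
  \sum_(0 <= k < 3 ^ M.+1) slex_entry R M.+1 0 k * slex_entry R M.+1 0 k =
  (2 * 3 ^ M.+1)%:R.
Proof.
rewrite expnS; under eq_bigr do rewrite slex_entry0.
rewrite (big_nat_divmod 3 _ (fun t _ => slex_lead t * slex_lead t)).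
under eq_bigr do rewrite sumr_const_nat subn0.
by rewrite sumrMnl sum_slex_lead_sqr -mulrnA mulnA.
Qed.

Lemma slex_dot0S M i :
  \sum_(0 <= k < 3 ^ M.+2) slex_entry R M.+2 0 k * slex_entry R M.+2 i.+1 k = 0.
Proof.
rewrite expnS; under eq_bigr do rewrite slex_entry0 slex_entryS.
rewrite (big_nat_divmod 3 _ (fun t j => slex_lead t * slex_entry R M.+1 i j)).
under eq_bigr do rewrite -mulr_sumr.
by rewrite -mulr_suml sum_slex_lead mul0r.
Qed.

Lemma slex_dotSS M i i' :
  \sum_(0 <= k < 3 ^ M.+2) slex_entry R M.+2 i.+1 k * slex_entry R M.+2 i'.+1 k =
  (\sum_(0 <= k < 3 ^ M.+1) slex_entry R M.+1 i k * slex_entry R M.+1 i' k) *+ 3.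
Proof.
rewrite expnS; under eq_bigr do rewrite !slex_entryS.
rewrite (big_nat_divmod 3 _
  (fun _ j => slex_entry R M.+1 i j * slex_entry R M.+1 i' j)).
by rewrite sumr_const_nat.
Qed.

Lemma slex_dot M i i' : (i < M.+1)%N -> (i' < M.+1)%N ->
  \sum_(0 <= k < 3 ^ M.+1) slex_entry R M.+1 i k * slex_entry R M.+1 i' k =
  (2 * 3 ^ M.+1)%:R *+ (i == i').
Proof.
elim: M i i' => [|M IH] [|i] [|i'] //= lt_i lt_i'.
1,2: by rewrite slex_dot00.
- by rewrite slex_dot0S.
- by under eq_bigr do rewrite mulrC; rewrite slex_dot0S.
rewrite slex_dotSS IH // eqSS; case: (i == i'); rewrite ?mul0rn // !mulr1n.
by rewrite -mulrnA [in RHS]expnSr mulnA.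
Qed.

Lemma gram_slex_col N :
  (0 < N)%N -> gram (@slex_col R N) = (2 * 3 ^ N)%N%:R%:M.
Proof.
case: N => // M _; apply/matrixP => i j.
rewrite gramE mxE; under eq_bigr do rewrite !mxE.
rewrite -(big_mkord xpredT
  (fun k => slex_entry R M.+1 i k * slex_entry R M.+1 j k)).
exact: slex_dot.
Qed.

End SemiLexicographic.

Lemma gram_perm_mx (R : numDomainType) N (P : 'M[R]_N) :
  is_perm_mx P -> gram (fun i => col i P) = 1%:M.
Proof.
case/is_perm_mxP => s ->.
by rewrite gram_col tr_perm_mx -perm_mxM mulVg perm_mx1.
Qed.

Theorem lemma1 (R : realFieldType) (N : nat) (hN : (1 <= N)%N) :
  gram (@slex_col R N) = (2 * 3 ^ N)%N%:R%:M
  /\ (forall P : 'M[R]_N, is_perm_mx P ->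
        gram (fun i : 'I_N => col i P) = 1%:M).
Proof. by split; [exact: gram_slex_col | exact: gram_perm_mx]. Qed.
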